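(* For any simple undirected graph $G$, $$n_G(\mathcal{L}_5)=\frac12\sum_{st\in E}\big(g_1(s,t)+g_1(t,s)\big),\qquad g_1(s,t)=\sum_{u\in\Gamma(s)\setminus\{t\}}\Big((k_t-1-a_{ut})(k_u-1-a_{ut})+1-|c(t,u)|\Big).$$
   Context: $a_{ij}$ adjacency entries, $k_x$ degree, $\Gamma(x)$ neighbourhood, $c(t,u)=\Gamma(t)\cap\Gamma(u)$. $\mathcal{L}_5$ is the path on 5 vertices; $n_G(F)$ counts (not necessarily induced) subgraphs isomorphic to $F$. *)

(* A simple graph on vertex set 'I_n is a symmetric,
   irreflexive boolean relation e. *)
From HB Require Import structures.
From mathcomp Require Import all_boot all_order all_algebra.
Set Implicit Arguments. Unset Strict Implicit. Unset Printing Implicit Defensive.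
Import Order.TTheory GRing.Theory Num.Theory.

Section Graph.
Variable n : nat.
Variable e : rel 'I_n.

Definition edges : {set {set 'I_n}} :=
  [set A : {set 'I_n} | [exists x, exists y, e x y && (A == [set x; y])]].

Definition adj (x y : 'I_n) : nat := e x y.
Definition deg (x : 'I_n) : nat := #|[set y | e x y]|.
Definition common (t u : 'I_n) : {set 'I_n} := [set y | e t y && e u y].

Definition path5_edges (f : {ffun 'I_5 -> 'I_n}) : {set {set 'I_n}} :=
  [set [set f (inord i); f (inord i.+1)] | i : 'I_4].

(* n_G(L_5): number of (not necessarily induced) subgraphs of G isomorphic
   to the path on 5 vertices.  Since L_5 has no isolated vertices such a
   subgraph is determined by its edge set, which must be the edge set of
   an injectively embedded path on 5 vertices. *)
Definition nP5 : nat :=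
  #|[set S : {set {set 'I_n}} | (S \subset edges) &&
       [exists f : {ffun 'I_5 -> 'I_n}, injectiveb f && (S == path5_edges f)]]|.

Local Open Scope ring_scope.

Definition g1 (s t : 'I_n) : int :=
  \sum_(u : 'I_n | e s u && (u != t))
     (((deg t)%:Z - 1 - (adj u t)%:Z) * ((deg u)%:Z - 1 - (adj u t)%:Z)
      + 1 - (#|common t u|)%:Z).

End Graph.

From HB Require Import structures.
From mathcomp Require Import all_boot all_order all_algebra zify.
Set Implicit Arguments. Unset Strict Implicit. Unset Printing Implicit Defensive.
Import Order.TTheory GRing.Theory Num.Theory.

(* An embedding of L_5 is an injective map f : 'I_5 -> V sending consecutive
   vertices to adjacent ones.  Every copy of L_5 in G has exactly two
   embeddings, f and its reversal, as these are the only orderings of its five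
   vertices along its four edges; hence there are 2 n_G(L_5) embeddings.
   Count them by the middle vertex s and its neighbours t <> u on the path:
   the ends are x in A = Γ(t) \ {s,u} and y in B \ {x}, B = Γ(u) \ {s,t},
   which leaves |A||B| - |A ∩ B| choices, where |A| = k_t - 1 - a_ut,
   |B| = k_u - 1 - a_ut and |A ∩ B| = |c(t,u)| - 1 (s is the common neighbour
   of t and u that was removed).  Summed over the ordered edges (s,t) this is
   the sum of g_1(s,t), and each unordered edge contributes
   g_1(s,t) + g_1(t,s). *)

Lemma sum_card_setD1 (T : finType) (A B : {set T}) :
  \sum_(x in A) #|B :\ x| + #|A :&: B| = #|A| * #|B|.
Proof.
rewrite -sum_nat_const /setI -sum1dep_card big_mkcondr -big_split /=.
by apply: eq_bigr => x _; rewrite [RHS](cardsD1 x) addnC; case: (x \in B).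
Qed.

Lemma sum_pair (A B : finType) (F : A * B -> nat) : \sum_p F p = \sum_a \sum_b F (a, b).
Proof. by rewrite pair_bigA; apply: eq_bigr => -[]. Qed.

Definition consecutive (a b : nat) : bool := (a == b.+1) || (b == a.+1).

Lemma inord_neqS (i : 'I_4) : (inord i : 'I_5) != inord i.+1.
Proof. by have lt_i4 := ltn_ord i; apply/eqP => /(congr1 val); rewrite /= !inordK; lia. Qed.

Lemma consecutive_window (j : 'I_4) (a b : 'I_5) :
  a \in [set inord j; inord j.+1] -> b \in [set inord j; inord j.+1] -> a != b ->
  consecutive a b.
Proof.
have lt_j4 := ltn_ord j.
by move=> /set2P [->|->] /set2P [->|->]; rewrite ?eqxx // /consecutive !inordK ?eqxx ?orbT //; lia.
Qed.

Lemma ord5_window (k : 'I_5) : exists i : 'I_4, k = inord i \/ k = inord i.+1.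
Proof.
exists (inord k.-1); have := ltn_ord k.
by case: k => [[|m] lt_k5] /=; [left | right]; apply: val_inj; rewrite /= !inordK //; lia.
Qed.

Lemma rev_ord_inord (i : 'I_4) : rev_ord (inord i : 'I_5) = inord (rev_ord i).+1.
Proof. by have lt_i4 := ltn_ord i; apply: val_inj; rewrite /= !inordK; lia. Qed.

Lemma rev_ord_inordS (i : 'I_4) : rev_ord (inord i.+1 : 'I_5) = inord (rev_ord i).
Proof. by have lt_i4 := ltn_ord i; apply: val_inj; rewrite /= !inordK; lia. Qed.

Lemma consecutive_perm_iota5 (l : seq nat) :
  perm_eq l (iota 0 5) -> sorted consecutive l -> l = iota 0 5 \/ l = rev (iota 0 5).
Proof.
have checked : all (fun l => sorted consecutive l ==> (l == iota 0 5) || (l == rev (iota 0 5)))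
                   (permutations (iota 0 5)) by vm_compute.
rewrite -mem_permutations => /(allP checked) /implyP /[apply].
by case/orP => /eqP ->; [left | right].
Qed.

Lemma path5_automorphism (σ : 'I_5 -> 'I_5) : injective σ ->
  (forall i : 'I_4, consecutive (σ (inord i)) (σ (inord i.+1))) -> σ =1 id \/ σ =1 @rev_ord 5.
Proof.
move=> σ_inj σ_cons.
pose l := map val (codom σ).
have nth_l (k : 'I_5) : nth 0 l k = σ k.
  by rewrite /l codomE -map_comp (nth_map ord0) ?size_enum_ord ?nth_ord_enum.
have l_perm : perm_eq l (iota 0 5).
  rewrite /l -val_enum_ord perm_map //; apply: uniq_perm; rewrite ?enum_uniq //.
    by rewrite codomE map_inj_uniq ?enum_uniq.
  by move=> k; rewrite mem_enum (injF_onto σ_inj).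
have l_sorted : sorted consecutive l.
  apply/(sortedP 0) => k; rewrite /l size_map size_codom card_ord => lt_k4.
  by have := σ_cons (@Ordinal 4 k lt_k4); rewrite -!nth_l !inordK // ltnW.
have [l_eq | l_eq] := consecutive_perm_iota5 l_perm l_sorted; [left | right] => k;
  apply: val_inj; rewrite /= -nth_l l_eq; case: k => [[|[|[|[|[|?]]]]] ?] //.
Qed.

Lemma enum_ord5 : enum 'I_5 = [:: inord 0; inord 1; inord 2; inord 3; inord 4].
Proof. by apply: (inj_map val_inj); rewrite val_enum_ord /= !inordK. Qed.

Section Path5Edges.
Variable n : nat.
Local Notation V := 'I_n.
Implicit Types f g : {ffun 'I_5 -> V}.

Definition path5_rev f : {ffun 'I_5 -> V} := [ffun k => f (rev_ord k)].

Lemma path5_edges_rev f : path5_edges (path5_rev f) = path5_edges f.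
Proof.
apply/setP => A; apply/imsetP/imsetP => -[i _ ->]; exists (rev_ord i) => //;
  by rewrite !ffunE rev_ord_inord rev_ord_inordS ?rev_ordK setUC.
Qed.

Lemma path5_rev_neq f : injective f -> path5_rev f != f.
Proof.
by move=> f_inj; apply/eqP => /ffunP /(_ ord0); rewrite ffunE => /f_inj /(congr1 val).
Qed.

Lemma eq_path5_edges f g : injective f -> injective g ->
  path5_edges g = path5_edges f -> g = f \/ g = path5_rev f.
Proof.
move=> f_inj g_inj eq_fg.
have edge_g (i : 'I_4) : exists j : 'I_4,
    [set g (inord i); g (inord i.+1)] = [set f (inord j); f (inord j.+1)].
  have : [set g (inord i); g (inord i.+1)] \in path5_edges f by rewrite -eq_fg; apply: imset_f.
  by case/imsetP => j _ ->; exists j.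
have /fin_all_exists [σ gσ] (k : 'I_5) : exists j, g k = f j.
  have [i k_i] := ord5_window k; have [j eq_ij] := edge_g i.
  have : g k \in [set f (inord j); f (inord j.+1)].
    by rewrite -eq_ij; case: k_i => ->; rewrite ?set21 ?set22.
  by case/set2P => ->; eexists.
have σ_inj : injective σ by move=> a b eq_ab; apply: g_inj; rewrite !gσ eq_ab.
have σ_window (a : 'I_5) (j : 'I_4) :
    g a \in [set f (inord j); f (inord j.+1)] -> σ a \in [set inord j; inord j.+1].
  by rewrite gσ !inE !(inj_eq f_inj).
have σ_cons (i : 'I_4) : consecutive (σ (inord i)) (σ (inord i.+1)).
  have [j eq_ij] := edge_g i; apply: (consecutive_window (j := j)).
  - by apply: (σ_window _ j); rewrite -eq_ij set21.
  - by apply: (σ_window _ j); rewrite -eq_ij set22.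
  - by rewrite (inj_eq σ_inj) inord_neqS.
have [σ_id | σ_rev] := path5_automorphism σ_inj σ_cons; [left | right];
  by apply/ffunP => k; rewrite ?ffunE gσ ?σ_id ?σ_rev.
Qed.

End Path5Edges.

Section Embeddings.
Variable n : nat.
Variable e : rel 'I_n.
Hypothesis e_sym : symmetric e.
Hypothesis e_irr : irreflexive e.
Local Notation V := 'I_n.
Implicit Types (x y s t u : V) (f g : {ffun 'I_5 -> V}).

Definition path5_embeddings : {set {ffun 'I_5 -> V}} :=
  [set f : {ffun 'I_5 -> V} | injectiveb f && [forall i : 'I_4, e (f (inord i)) (f (inord i.+1))]].

Lemma path5_rev_embedding f :
  f \in path5_embeddings -> path5_rev f \in path5_embeddings.
Proof.
rewrite !inE => /andP [/injectiveP f_inj /forallP f_edge]; apply/andP; split.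
  by apply/injectiveP => a b; rewrite !ffunE => /f_inj /rev_ord_inj.
by apply/forallP => i; rewrite !ffunE rev_ord_inord rev_ord_inordS e_sym.
Qed.

Lemma mem_edges x y : x != y -> ([set x; y] \in edges e) = e x y.
Proof.
move=> neq_xy; rewrite inE; apply/existsP/idP => [[a /existsP [b /andP [e_ab /eqP xy_ab]]] | e_xy].
  have /set2P x_ab : x \in [set a; b] by rewrite -xy_ab set21.
  have /set2P y_ab : y \in [set a; b] by rewrite -xy_ab set22.
  by case: x_ab y_ab neq_xy => -> [] ->; rewrite ?eqxx // => _; rewrite // e_sym.
by exists x; apply/existsP; exists y; rewrite e_xy eqxx.
Qed.

Lemma path5_edges_sub_edges f : injective f ->
  (path5_edges f \subset edges e) = [forall i : 'I_4, e (f (inord i)) (f (inord i.+1))].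
Proof.
move=> f_inj.
have neq_f (i : 'I_4) : f (inord i) != f (inord i.+1) by rewrite (inj_eq f_inj) inord_neqS.
apply/subsetP/forallP => [sub_fe i | f_edge _ /imsetP [i _ ->]].
  by rewrite -mem_edges //; apply/sub_fe/imset_f.
by rewrite mem_edges.
Qed.

Lemma path5_subgraphsE :
  [set S : {set {set V}} | (S \subset edges e) &&
     [exists f : {ffun 'I_5 -> V}, injectiveb f && (S == path5_edges f)]]
  = @path5_edges n @: path5_embeddings.
Proof.
apply/setP => S; rewrite inE; apply/andP/imsetP => [[sub_Se /existsP [f]] | [f]].
  case/andP => f_inj /eqP S_f; exists f => //.
  by rewrite inE f_inj -path5_edges_sub_edges -?S_f //; apply/injectiveP.
rewrite inE => /andP [f_inj f_edge] ->; split.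
  by rewrite path5_edges_sub_edges //; apply/injectiveP.
by apply/existsP; exists f; rewrite f_inj eqxx.
Qed.

Lemma path5_edges_fiber f : f \in path5_embeddings ->
  [set g in path5_embeddings | path5_edges g == path5_edges f] = [set f; path5_rev f].
Proof.
move=> f_emb; apply/setP => g; rewrite in_set in_set2; apply/andP/pred2P => [[g_emb /eqP fg] | ].
  move: f_emb g_emb; rewrite !inE => /andP [/injectiveP f_inj _] /andP [/injectiveP g_inj _].
  exact: eq_path5_edges.
by case=> ->; rewrite ?path5_edges_rev ?path5_rev_embedding.
Qed.

Lemma card_path5_embeddings : #|path5_embeddings| = 2 * nP5 e.
Proof.
rewrite /nP5 path5_subgraphsE -sum1_card (partition_big_imset (@path5_edges n)) /=.
rewrite mulnC -sum_nat_const; apply: eq_bigr => _ /imsetP [f f_emb ->].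
have f_inj : injective f by move: f_emb; rewrite inE => /andP [/injectiveP].
by rewrite sum1dep_card path5_edges_fiber // cards2 eq_sym path5_rev_neq.
Qed.

Definition is_path5 x t s u y : bool :=
  uniq [:: x; t; s; u; y] && [&& e x t, e t s, e s u & e u y].

Definition nbhd_but t a b : {set V} := [set x | e t x] :\ a :\ b.

Lemma is_path5E x t s u y : is_path5 x t s u y =
  [&& e s t, e s u & u != t] && (x \in nbhd_but t s u) && (y \in nbhd_but u s t :\ x).
Proof.
rewrite /is_path5 /nbhd_but /= !inE !negb_or !andbT.
case: (eqVneq x t) => [-> | _]; first by rewrite e_irr !andbF.
case: (eqVneq t s) => [-> | _]; first by rewrite e_irr !andbF.
case: (eqVneq s u) => [-> | _]; first by rewrite e_irr !andbF.
case: (eqVneq u y) => [-> | _]; first by rewrite e_irr !andbF.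
rewrite (eq_sym u t) (eq_sym y x) (eq_sym y t) (eq_sym y s) (e_sym x t) (e_sym t s) /=.
by case: (e t x); case: (e s t); case: (e s u); case: (e u y);
  case: (x != s); case: (x != u); case: (x != y); case: (t != u); case: (t != y); case: (s != y).
Qed.

(* The path x - t - s - u - y is recorded as (s, (t, (u, (x, y)))): the
   order in which the vertices are summed over in g1. *)
Definition path5_coords f : V * (V * (V * (V * V))) :=
  (f (inord 2), (f (inord 1), (f (inord 3), (f (inord 0), f (inord 4))))).

Lemma path5_coords_inj : injective path5_coords.
Proof.
move=> f g [eq2 eq1 eq3 eq0 eq4]; apply/ffunP => k; rewrite -(inord_val k).
by case: (nat_of_ord k) (ltn_ord k) => [|[|[|[|[|?]]]]] // _.
Qed.

Lemma path5_embeddingE f : (f \in path5_embeddings) =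
  is_path5 (f (inord 0)) (f (inord 1)) (f (inord 2)) (f (inord 3)) (f (inord 4)).
Proof.
rewrite inE /injectiveb /dinjectiveb enum_ord5; congr (_ && _).
apply/forallP/and4P => [f_edge | [? ? ? ?] [[|[|[|[|?]]]] ?] //].
by split; [move: (f_edge (inord 0)) | move: (f_edge (inord 1)) | move: (f_edge (inord 2))
  | move: (f_edge (inord 3))]; rewrite !inordK.
Qed.

Lemma mem_path5_coords s t u x y :
  ((s, (t, (u, (x, y)))) \in path5_coords @: path5_embeddings) = is_path5 x t s u y.
Proof.
apply/imsetP/idP => [[f f_emb [-> -> -> -> ->]] | xtsuy]; first by rewrite -path5_embeddingE.
pose f : {ffun 'I_5 -> V} := [ffun k : 'I_5 => nth x [:: x; t; s; u; y] k].
by exists f; rewrite ?path5_embeddingE /path5_coords !ffunE !inordK.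
Qed.

Lemma deg_nbhd_but t a b : e t a -> a != b -> deg e t = (1 + adj e t b + #|nbhd_but t a b|)%N.
Proof.
move=> e_ta neq_ab; rewrite /deg /nbhd_but (cardsD1 a) inE e_ta.
by rewrite (cardsD1 b (_ :\ a)) !inE eq_sym neq_ab addnA.
Qed.

Lemma common_nbhd_but s t u : e s t -> e s u ->
  #|common e t u| = (#|nbhd_but t s u :&: nbhd_but u s t|).+1.
Proof.
move=> e_st e_su; rewrite (cardsD1 s) inE -!(e_sym s) e_st e_su; congr (_.+1).
apply: eq_card => x; rewrite !inE.
case: (eqVneq x t) => [-> | _]; first by rewrite e_irr !andbF.
case: (eqVneq x u) => [-> | _]; first by rewrite e_irr !andbF.
by case: (x != s); case: (e t x).
Qed.

Lemma card_path5_embeddings_sum : #|path5_embeddings| =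
  \sum_s \sum_t \sum_u \sum_x \sum_y is_path5 x t s u y.
Proof.
rewrite -(card_imset _ path5_coords_inj) -sum1_card big_mkcond sum_pair.
apply: eq_bigr => s _; rewrite sum_pair; apply: eq_bigr => t _.
rewrite sum_pair; apply: eq_bigr => u _; rewrite sum_pair; apply: eq_bigr => x _.
by apply: eq_bigr => y _; rewrite mem_path5_coords.
Qed.

Lemma sum_is_path5 s t u : \sum_x \sum_y is_path5 x t s u y =
  [&& e s t, e s u & u != t] * \sum_(x in nbhd_but t s u) #|nbhd_but u s t :\ x|.
Proof.
under eq_bigr => x _ do under eq_bigr => y _ do rewrite is_path5E.
case: [&& e s t, e s u & u != t]; last by rewrite big1 // => x _; rewrite big1.
rewrite mul1n [RHS]big_mkcond; apply: eq_bigr => x _ /=.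
case: (x \in nbhd_but t s u); last by rewrite big1.
by rewrite -sum1_card [RHS]big_mkcond.
Qed.

Local Open Scope ring_scope.

Lemma sum_edges_sym (R : nmodType) (F : V -> V -> R) :
  \sum_(s : V) \sum_(t : V | (s < t)%N && e s t) (F s t + F t s) = \sum_s \sum_(t | e s t) F s t.
Proof.
have split_lt s : \sum_(t | e s t) F s t =
    \sum_(t : V | (s < t)%N && e s t) F s t + \sum_(t : V | (t < s)%N && e t s) F s t.
  rewrite (bigID (fun t => (s < t)%N)) /=; congr (_ + _); apply: eq_bigl => t.
    by rewrite andbC.
  by case: (ltngtP s t) => [_ | _ | /val_inj ->]; rewrite /= ?e_irr ?andbF ?andbT // e_sym.
under [RHS]eq_bigr => s _ do rewrite split_lt.
rewrite big_split /=; under eq_bigr => s _ do rewrite big_split /=.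
rewrite big_split /=; congr (_ + _).
under eq_bigr => s _ do rewrite big_mkcond.
by rewrite exchange_big; apply: eq_bigr => t _; rewrite [RHS]big_mkcond.
Qed.

Lemma card_path5_ends s t u : e s t -> e s u -> u != t ->
  (\sum_(x in nbhd_but t s u) #|nbhd_but u s t :\ x|)%:Z =
  ((deg e t)%:Z - 1 - (adj e u t)%:Z) * ((deg e u)%:Z - 1 - (adj e u t)%:Z)
  + 1 - (#|common e t u|)%:Z.
Proof.
move=> e_st e_su neq_ut.
have neq_su : s != u by apply: contraTneq e_su => ->; rewrite e_irr.
have neq_st : s != t by apply: contraTneq e_st => ->; rewrite e_irr.
have := sum_card_setD1 (nbhd_but t s u) (nbhd_but u s t).
have e_ts : e t s by rewrite e_sym.
have e_us : e u s by rewrite e_sym.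
rewrite (deg_nbhd_but e_ts neq_su) (deg_nbhd_but e_us neq_st) (common_nbhd_but e_st e_su).
rewrite /adj (e_sym t u) => /(congr1 Posz).
rewrite !PoszD PoszM; lia.
Qed.

Lemma sum_g1 : \sum_s \sum_(t | e s t) g1 e s t = (#|path5_embeddings|)%:Z.
Proof.
rewrite card_path5_embeddings_sum -natz natr_sum; apply: eq_bigr => s _.
rewrite natr_sum big_mkcond; apply: eq_bigr => t _.
rewrite natr_sum /g1; have [e_st | ne_st] := boolP (e s t).
  rewrite big_mkcond; apply: eq_bigr => u _; rewrite sum_is_path5 e_st.
  by case: ifP => [/andP [e_su neq_ut] | _]; rewrite ?mul1n ?natz ?card_path5_ends.
by rewrite big1 // => u _; rewrite sum_is_path5 (negbTE ne_st).
Qed.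

End Embeddings.

Local Open Scope ring_scope.

Theorem proposition13 (n : nat) (e : rel 'I_n)
  (e_sym : symmetric e) (e_irr : irreflexive e) :
  ((nP5 e)%:R : rat) =
  (1 / 2) * \sum_(s : 'I_n) \sum_(t : 'I_n | ((s < t)%N && e s t))
              ((g1 e s t + g1 e t s)%:~R : rat).
Proof.
have sum_int : \sum_(s : 'I_n) \sum_(t : 'I_n | (s < t)%N && e s t) (g1 e s t + g1 e t s)
    = (2 * nP5 e)%N%:Z.
  by rewrite sum_edges_sym // sum_g1 // card_path5_embeddings.
under eq_bigr => s _ do rewrite -rmorph_sum.
by rewrite -rmorph_sum sum_int /= -pmulrn natrM mulrA mulrC mul1r mulVf ?mulr1.
Qed.
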